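(* Every implication algebra $\mathfrak{A}=(A,\to)$ with $A$ finite has a finite representation, i.e. there is an injective map $h$ from $A$ into $\wp(\top)$ for some binary relation $\top\subseteq X\times X$ with $X$ finite, such that $h(a\to b)=(\top\setminus h(a))\cup h(b)$ for all $a,b\in A$.
   Context: An implication algebra is $(A,\to)$ satisfying, for all $a,b,c$: $(a\to b)\to a=a$; $(a\to b)\to b=(b\to a)\to a$; $a\to(b\to c)=b\to(a\to c)$. *)

From mathcomp Require Import all_boot.
Set Implicit Arguments. Unset Strict Implicit. Unset Printing Implicit Defensive.

Definition implication_algebra (A : Type) (imp : A -> A -> A) : Prop :=
  [/\ (forall a b : A, imp (imp a b) a = a),
      (forall a b : A, imp (imp a b) b = imp (imp b a) a)
    & (forall a b c : A, imp a (imp b c) = imp b (imp a c))].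

Definition has_finite_representation (A : Type) (imp : A -> A -> A) : Prop :=
  exists (X : finType) (T : {set X * X}) (h : A -> {set X * X}),
    [/\ (forall a, h a \subset T),
        injective h
      & (forall a b, h (imp a b) = (T :\: h a) :|: h b)].

From mathcomp Require Import all_boot.
Set Implicit Arguments. Unset Strict Implicit. Unset Printing Implicit Defensive.

(* Order an implication algebra by a ≼ b iff a ~> b = a ~> a (all a ~> a
   coincide).  The axioms make ~> self-distributive, so for a filter F (a set
   containing a ~> a and closed under modus ponens) the preimage of F under
   x ~> _ is again a filter.  Hence a filter that is maximal among those
   containing a and avoiding b is prime: its indicator is a morphism into the
   two-element implication algebra.  Such morphisms separate points, and
   a |-> {(f, f) | f a} is a representation inside the diagonal of the set of
   all morphisms f : A -> bool. *)

Reserved Notation "a ~> b" (at level 55, right associativity).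
Reserved Notation "a ≼ b" (at level 70, no associativity).

Section ImplicationOrder.

Variables (A : Type) (imp : A -> A -> A).
Local Notation "a ~> b" := (imp a b).
Hypothesis iaA : implication_algebra imp.

Let imp_absorb a b : (a ~> b) ~> a = a.
Proof. by case: iaA. Qed.

Let imp_join_comm a b : (a ~> b) ~> b = (b ~> a) ~> a.
Proof. by case: iaA. Qed.

Let imp_exchange a b c : a ~> b ~> c = b ~> a ~> c.
Proof. by case: iaA. Qed.

Lemma impxx_idem x : (x ~> x) ~> x ~> x = x ~> x.
Proof. by rewrite imp_exchange imp_absorb. Qed.

Lemma imp_top x y : y ~> x ~> x = x ~> x.
Proof.
set u := x ~> x; set q := y ~> u; set p := u ~> y.
(* [q ~> q = q] and [p ~> p = u], and these agree by [imp_join_comm] at (p, q). *)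
have qx : q ~> x = x by rewrite /q imp_exchange imp_absorb.
have qu : q ~> u = u by rewrite /u imp_exchange qx.
have py : p ~> y = u by rewrite imp_join_comm.
have pq : p ~> q = q by rewrite imp_exchange imp_absorb.
have qp : q ~> p = p by rewrite imp_exchange imp_absorb.
have qq : q ~> q = q by rewrite {1}/q imp_exchange qu.
have pp : p ~> p = u by rewrite {1}/p imp_exchange py impxx_idem.
by rewrite -qq -{1}pq imp_join_comm qp pp.
Qed.

Lemma impxx_eq x y : x ~> x = y ~> y.
Proof. by have := imp_join_comm (x ~> x) (y ~> y); rewrite !imp_top. Qed.

Lemma top_imp x y : (x ~> x) ~> y = y.
Proof. by rewrite (impxx_eq x y) imp_absorb. Qed.

Lemma imp_K x y : x ~> y ~> x = x ~> x.
Proof. by rewrite imp_exchange imp_top. Qed.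

Definition imp_le a b := a ~> b = a ~> a.
Local Notation "a ≼ b" := (imp_le a b).

Lemma imp_le_impr a b : a ≼ b ~> a.
Proof. exact: imp_K. Qed.

Lemma imp_le_join a b : a ≼ (a ~> b) ~> b.
Proof. by rewrite /imp_le imp_exchange; apply: impxx_eq. Qed.

Lemma imp_le_antisym a b : a ≼ b -> b ≼ a -> a = b.
Proof. by move=> ab ba; rewrite -(top_imp b a) -ba -imp_join_comm ab top_imp. Qed.

Lemma imp_le_join_eq a b : a ≼ b -> (b ~> a) ~> a = b.
Proof. by move=> ab; rewrite -imp_join_comm ab top_imp. Qed.

Lemma imp_le_trans a b c : a ≼ b -> b ≼ c -> a ≼ c.
Proof. by move=> ab /imp_le_join_eq <-; rewrite /imp_le imp_exchange ab imp_top. Qed.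

Lemma imp_le_imp2r a b c : b ≼ c -> a ~> b ≼ a ~> c.
Proof.
by move=> /imp_le_join_eq <-; rewrite /imp_le [X in _ ~> X = _]imp_exchange imp_K.
Qed.

Lemma imp_le_imp2l a b c : a ≼ b -> b ~> c ≼ a ~> c.
Proof.
move=> ab; rewrite /imp_le imp_exchange (imp_le_trans ab (imp_le_join b c)).
exact: impxx_eq.
Qed.

Lemma imp_le_fix p r x : p ~> r ≼ x -> p ~> x = x.
Proof.
move=> prx; apply: imp_le_antisym; last exact: imp_le_impr.
have xp : x ~> p ≼ p by rewrite -{2}(imp_absorb p r); exact: imp_le_imp2l.
by rewrite /imp_le imp_join_comm xp; apply: impxx_eq.
Qed.

Lemma imp_dist p q r : p ~> q ~> r = (p ~> q) ~> p ~> r.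
Proof.
apply: imp_le_antisym.
  have pq_le : p ~> q ≼ (q ~> p ~> r) ~> p ~> r.
    rewrite -(imp_le_fix (imp_le_impr (p ~> r) (q ~> p ~> r))).
    exact/imp_le_imp2r/imp_le_join.
  rewrite imp_exchange /imp_le [_ ~> (p ~> q) ~> _]imp_exchange pq_le.
  exact: impxx_eq.
by rewrite [(p ~> q) ~> _]imp_exchange; apply/imp_le_imp2r/imp_le_imp2l/imp_le_impr.
Qed.

Lemma imp_le_imp_join x y b : x ~> b ≼ ((x ~> y) ~> b) ~> b.
Proof.
rewrite -(imp_le_fix (imp_le_join (x ~> y) b)).
exact/imp_le_imp2r/imp_le_impr.
Qed.

End ImplicationOrder.

Section Separation.

Variables (A : finType) (imp : A -> A -> A).
Local Notation "a ~> b" := (imp a b).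
Local Notation "a ≼ b" := (imp_le imp a b).
Hypothesis iaA : implication_algebra imp.

Definition imp_filter (F : {set A}) : bool :=
  [forall u, u ~> u \in F] &&
  [forall x, forall y, (x \in F) ==> (x ~> y \in F) ==> (y \in F)].

Lemma imp_filterP (F : {set A}) :
  reflect ((forall u, u ~> u \in F) /\
           (forall x y, x \in F -> x ~> y \in F -> y \in F))
          (imp_filter F).
Proof.
apply: (iffP andP) => [[/forallP top /forallP mp] | [top mp]]; split => //.
- by move=> x y xF xyF; move/forallP/(_ y): (mp x); rewrite xF xyF.
- exact/forallP.
- by apply/forallP => x; apply/forallP => y; apply/implyP => xF; apply/implyP/mp.
Qed.

Lemma filter_top_singleton c : imp_filter [set c ~> c].
Proof.
apply/imp_filterP; split=> [u | x y]; rewrite !inE.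
  by rewrite (impxx_eq iaA u c).
by move=> /eqP-> /eqP; rewrite (top_imp iaA) => ->.
Qed.

Section Filter.

Variable F : {set A}.
Hypothesis filterF : imp_filter F.

Lemma filter_top u : u ~> u \in F.
Proof. by case/imp_filterP: filterF. Qed.

Lemma filter_mp x y : x \in F -> x ~> y \in F -> y \in F.
Proof. by case/imp_filterP: filterF => _; apply. Qed.

Lemma filter_le x y : x ≼ y -> x \in F -> y \in F.
Proof. by move=> xy xF; apply: (filter_mp xF); rewrite xy filter_top. Qed.

Lemma filter_sub_preim x : F \subset imp x @^-1: F.
Proof.
by apply/subsetP => z zF; rewrite inE (filter_le (imp_le_impr iaA _ _) zF).
Qed.

Lemma preim_filter x : imp_filter (imp x @^-1: F).
Proof.
apply/imp_filterP; split=> [u | z w]; rewrite !inE.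
  by rewrite (imp_top iaA) filter_top.
by rewrite (imp_dist iaA); apply: filter_mp.
Qed.

End Filter.

Definition imp_morph (f : A -> bool) := {morph f : x y / x ~> y >-> x ==> y}.

Lemma maximal_filter_morph (F : {set A}) b :
  imp_filter F -> b \notin F -> (forall x, x \notin F -> x ~> b \in F) ->
  imp_morph (fun x => x \in F).
Proof.
move=> filterF bF maxF.
have notin_imp x y : x \notin F -> x ~> y \in F.
  move=> xF; apply: contraR bF => xyF.
  apply: (filter_mp filterF (maxF _ xyF)).
  exact: (filter_le filterF (imp_le_imp_join iaA x y b) (maxF x xF)).
move=> x y; case: (boolP (x \in F)) => [xF | /notin_imp -> //].
case: (boolP (y \in F)) => [yF | yF].
  exact: (filter_le filterF (imp_le_impr iaA _ _) yF).
by apply: contraNF yF; apply: (filter_mp filterF xF).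
Qed.

Lemma morph_sep_nle a b :
  a ~> b != a ~> a -> exists2 f, imp_morph f & f a && ~~ f b.
Proof.
move=> ab_top.
pose P F := [&& imp_filter F, a \in F & b \notin F].
(* the principal filter generated by a *)
have P0 : P (imp a @^-1: [set a ~> a]).
  by rewrite /P preim_filter ?filter_top_singleton // !inE eqxx ab_top.
case: (arg_maxnP (fun F : {set A} => #|F|) P0) => F /and3P[filterF aF bF] Fmax.
exists (fun x => x \in F); last by rewrite aF.
apply: (maximal_filter_morph filterF bF) => x xF; apply: contraR xF => xbF.
have PG : P (imp x @^-1: F).
  rewrite /P (preim_filter filterF) !inE xbF andbT.
  exact: (filter_le filterF (imp_le_impr iaA a x) aF).
have -> : F = imp x @^-1: F.
  by apply/eqP; rewrite eqEcard (filter_sub_preim filterF) /=; apply: Fmax.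
by rewrite inE (filter_top filterF).
Qed.

Lemma morph_sep_neq a b : a != b -> exists2 f, imp_morph f & f a != f b.
Proof.
move=> neq_ab.
have [ab | ab_top] := eqVneq (a ~> b) (a ~> a); last first.
  case: (morph_sep_nle ab_top) => f fM /andP[fa /negPf fb].
  by exists f; rewrite // fa fb.
have [ba | ba_top] := eqVneq (b ~> a) (b ~> b); last first.
  case: (morph_sep_nle ba_top) => f fM /andP[fb /negPf fa].
  by exists f; rewrite // fa fb.
by rewrite (imp_le_antisym iaA ab ba) eqxx in neq_ab.
Qed.

End Separation.

Section Representation.

Variables (A : finType) (imp : A -> A -> A).

Definition imp_morphb (f : {ffun A -> bool}) : bool :=
  [forall x, forall y, f (imp x y) == (f x ==> f y)].

Lemma imp_morphP (f : {ffun A -> bool}) :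
  reflect (imp_morph imp f) (imp_morphb f).
Proof.
apply: (iffP forallP) => [fM x y | fM x].
  exact/eqP/(forallP (fM x)).
by apply/forallP => y; apply/eqP/fM.
Qed.

Definition diag_morphs : {set {ffun A -> bool} * {ffun A -> bool}} :=
  [set p | (p.1 == p.2) && imp_morphb p.1].

Definition morph_repr a := [set p in diag_morphs | p.1 a].

Lemma morph_repr_sub a : morph_repr a \subset diag_morphs.
Proof. by apply/subsetP => p; rewrite inE => /andP[]. Qed.

Lemma morph_repr_imp a b :
  morph_repr (imp a b) = (diag_morphs :\: morph_repr a) :|: morph_repr b.
Proof.
apply/setP => -[f g]; rewrite !inE /=.
case: (f == g) => //=; case: imp_morphP => //= fM.
by rewrite fM; case: (f a); case: (f b).
Qed.

Lemma morph_repr_inj : implication_algebra imp -> injective morph_repr.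
Proof.
move=> iaA a b eq_ab; case: (eqVneq a b) => // /(morph_sep_neq iaA) [f fM fab].
have gM : imp_morphb (finfun f) by apply/imp_morphP => x y; rewrite !ffunE.
move/setP/(_ (finfun f, finfun f)): eq_ab; rewrite !inE /= eqxx gM /= !ffunE.
by move=> fab_eq; rewrite fab_eq eqxx in fab.
Qed.

End Representation.

Theorem corollary4 (A : finType) (imp : A -> A -> A) :
  implication_algebra imp -> has_finite_representation imp.
Proof.
move=> iaA; exists _, (diag_morphs imp), (morph_repr imp); split.
- exact: morph_repr_sub.
- exact: morph_repr_inj.
- exact: morph_repr_imp.
Qed.
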